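(* Let $H$ be a twin-free simple graph on $n$ vertices, and let $i(H)$ be the minimum cardinality of an identifying code of $H$. Label the vertices of $H$ by $1,\dots,n$ via a bijection chosen uniformly at random among all $n!$ bijections, obtaining a graph $G$ on $\{1,\dots,n\}$, and run the lexicographic algorithm (Algorithm 1) on $G$. Then for every $K\in\{1,\dots,n\}$, the probability that the returned code has cardinality at most $K$ is at least the probability that $\{1,\dots,K\}$ is an identifying code of $G$. In particular, the algorithm returns an identifying code of cardinality $i(H)$ with probability at least $1/\binom{n}{i(H)}$.
   Context: For a graph on vertex set $\{1,\dots,n\}$ (vertices ordered by the usual order of integers) and a vertex $v$, $N(v)=\{v\}\cup\{w : vw\in E\}$ is its closed neighbourhood. A set $C$ of vertices is an identifying code if the sets $N(v)\cap C$, $v$ a vertex, are all nonempty and pairwise distinct. A graph is twin-free if $N(v)\neq N(w)$ for all distinct vertices $v,w$. The lexicographic algorithm (Algorithm 1) on a graph $G$ with vertex set $\{1,\dots,n\}$: set $C_0=\emptyset$. For $j=1,2,\dots,n$ in turn: (i) if $N(j)\cap C_{j-1}=\emptyset$, set $C_j=C_{j-1}\cup\{\min N(j)\}$; (ii) otherwise, if there exists $k\in\{1,\dots,j-1\}$ with $N(k)\cap C_{j-1}=N(j)\cap C_{j-1}$, let $k$ be the least such index; if $N(j)\neq N(k)$ set $C_j=C_{j-1}\cup\{\min(N(j)\triangle N(k))\}$, while if $N(j)=N(k)$ the algorithm stops immediately and returns ''failure''; (iii) otherwise set $C_j=C_{j-1}$. If the algorithm never fails, it returns $C_n$. Here $\triangle$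 denotes symmetric difference. *)

From mathcomp Require Import all_boot all_fingroup.
Set Implicit Arguments. Unset Strict Implicit. Unset Printing Implicit Defensive.

(* Vertices are 'I_n; vertex i : 'I_n stands for the paper's vertex i+1,
   so the usual order on 'I_n is the paper's order on {1,...,n}. *)

Section Defs.
Variable n : nat.
Implicit Types (e : rel 'I_n) (C A B : {set 'I_n}).

Definition simple_graph e := symmetric e /\ irreflexive e.

Definition N e (v : 'I_n) : {set 'I_n} := [set w | (w == v) || e v w].

Definition twin_free e := forall v w : 'I_n, v != w -> N e v != N e w.

Definition is_idcode e C : bool :=
  [forall v, N e v :&: C != set0] &&
  [forall v, forall w, (v != w) ==> (N e v :&: C != N e w :&: C)].

(* minimum cardinality of an identifying code (n is a bound since for a
   twin-free graph the whole vertex set is an identifying code) *)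
Definition idnum e : nat := \big[minn/n]_(C : {set 'I_n} | is_idcode e C) #|C|.

Definition minv A (d : 'I_n) : 'I_n :=
  odflt d [pick x in A | [forall y in A, x <= y]].

Definition symdiff A B : {set 'I_n} := (A :\: B) :|: (B :\: A).

(* one step (index j) of Algorithm 1; None means "failure" *)
Definition lex_step e C (j : 'I_n) : option {set 'I_n} :=
  if N e j :&: C == set0 then Some (C :|: [set minv (N e j) j])
  else
    let Kset := [set k : 'I_n | (k < j) && (N e k :&: C == N e j :&: C)] in
    if Kset != set0 then
      let k := minv Kset j in
      if N e j == N e k then None
      else Some (C :|: [set minv (symdiff (N e j) (N e k)) j])
    else Some C.

Definition lex_alg e : option {set 'I_n} :=
  foldl (fun oc j => if oc is Some C then lex_step e C j else None)
        (Some set0) (enum 'I_n).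

Definition relabel e (s : {perm 'I_n}) : rel 'I_n :=
  fun i j => e (s^-1 i)%g (s^-1 j)%g.

End Defs.

From mathcomp Require Import all_boot all_order all_fingroup.
Set Implicit Arguments. Unset Strict Implicit. Unset Printing Implicit Defensive.

(* Part 1.  If the prefix T = {0,...,K-1} is an identifying code of G, Algorithm 1
   never fails (G is twin-free) and every vertex it adds is the least element of
   a set meeting T (an uncovered neighbourhood, or the symmetric difference of
   two neighbourhoods that T separates), hence lies in T; so the output has at
   most K elements.  Counting labellings gives the first inequality.

   Part 2.  Algorithm 1 is correct: after processing the vertices below m, the
   current code covers and separates them.  Fix a minimum identifying code C0
   of H.  Every labelling s mapping C0 onto the prefix of size i(H) makes that
   prefix an identifying code of G, so by Part 1 and correctness the output is
   an identifying code of size exactly i(H).  By orbit-stabilizer, at least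
   n!/C(n, i(H)) labellings map C0 onto that prefix. *)

Section PermutingSets.
Variable T : finType.
Implicit Types (A B X Y : {set T}) (x y : T).

Definition rank_match X Y x : T := nth x (enum Y) (index x (enum X)).

Lemma rank_match_in X Y x : #|X| = #|Y| -> x \in X -> rank_match X Y x \in Y.
Proof. by move=> XY Xx; rewrite -mem_enum mem_nth // -cardE -XY cardE index_mem mem_enum. Qed.

Lemma rank_match_inj X Y : #|X| = #|Y| -> {in X &, injective (rank_match X Y)}.
Proof.
move=> XY x y Xx Xy; rewrite /rank_match.
have ltY z : z \in X -> index z (enum X) < size (enum Y).
  by move=> Xz; rewrite -cardE -XY cardE index_mem mem_enum.
rewrite (set_nth_default x y (ltY y Xy)) => /eqP; rewrite nth_uniq ?enum_uniq ?ltY //.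
move=> /eqP same; have [ex ey] : x \in enum X /\ y \in enum X by rewrite !mem_enum.
by rewrite -(nth_index x ex) -(nth_index x ey) same.
Qed.

(* Any two sets of the same size are mapped onto each other by a permutation:
   match A with B and the complement of A with the complement of B. *)
Lemma perm_onto_set A B : #|A| = #|B| -> exists q : {perm T}, q @: A = B.
Proof.
move=> AB; have ABc : #|~: A| = #|~: B|.
  by apply/eqP; rewrite -(eqn_add2l #|A|) cardsC AB cardsC.
pose f x := if x \in A then rank_match A B x else rank_match (~: A) (~: B) x.
have fA x : (f x \in B) = (x \in A).
  rewrite /f; case: ifP => Ax; first exact: rank_match_in.
  by apply: negbTE; rewrite -in_setC rank_match_in // inE Ax.
have f_inj : injective f.
  move=> x y; have [Ax Ay] := (fA x, fA y); case Ax': (x \in A); case Ay': (y \in A).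
  - by rewrite /f Ax' Ay'; apply: rank_match_inj.
  - by move=> fxy; move: Ax Ay; rewrite fxy Ax' Ay' => ->.
  - by move=> fxy; move: Ax Ay; rewrite fxy Ax' Ay' => ->.
  - by rewrite /f Ax' Ay'; apply: rank_match_inj; rewrite // inE ?Ax' ?Ay'.
exists (perm f_inj); apply/setP => y; apply/imsetP/idP => [[x Ax ->] | By].
  by rewrite permE fA.
have /codomP [x fxy] : y \in codom (perm f_inj) by rewrite perm_onto.
by exists x => //; rewrite -fA -(permE f_inj) -fxy.
Qed.

(* Every permutation of T has its support in T, so there are #|T|! of them. *)
Lemma card_all_perms : #|[set: {perm T}]| = #|T|`!.
Proof.
rewrite -cardsT -card_perm; apply: eq_card => s.
by rewrite inE; apply/esym/subsetP => x; rewrite inE.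
Qed.

(* Orbit-stabilizer count: the permutations sending A onto a given B of the same
   size form a coset of the stabilizer of A, and the orbit of A consists of
   #|A|-subsets, so #|T|! <= #{s | s(A) = B} * C(#|T|, #|A|). *)
Lemma card_perms_onto_set A B : #|A| = #|B| ->
  #|T|`! <= #|[set s : {perm T} | s @: A == B]| * 'C(#|T|, #|A|).
Proof.
move=> AB; have [q qAB] := perm_onto_set AB.
set Stab := ('C_[set: {perm T}][A | 'P^*])%g.
rewrite -card_all_perms -(card_orbit_stab 'P^* [set: {perm T}] A) mulnC leq_mul //.
  rewrite -(card_imset Stab (mulIg q)); apply/subset_leq_card/subsetP.
  move=> _ /imsetP [t /setIP [_ /astab1P tA] ->].
  rewrite inE -qAB -[in X in _ == X]tA -imset_comp.
  by apply/eqP/eq_imset => x; rewrite permM.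
rewrite -card_draws; apply: subset_leq_card; apply/subsetP => _ /orbitP [s _ <-].
by rewrite inE /= card_imset //; apply: perm_inj.
Qed.
End PermutingSets.


Section LexAlgorithm.
Variables (n : nat) (e : rel 'I_n).
Implicit Types (A B C D T : {set 'I_n}) (j k v w x y : 'I_n).

Lemma minvP A d : A != set0 -> minv A d \in A /\ forall y, y \in A -> minv A d <= y.
Proof.
move=> /set0Pn [x0 Ax0]; rewrite /minv.
case: pickP => [x /andP [Ax /forall_inP xmin] | nomin]; first by split=> // y /xmin.
have [x Ax xmin] := arg_minnP (fun x : 'I_n => nat_of_ord x) Ax0.
have Ax' : x \in A := Ax.
by move: (nomin x) => /= /negbT; rewrite Ax' /= => /forall_inPn [y /xmin ->].
Qed.

Lemma minv_lt A d y (K : nat) : y \in A -> y < K -> minv A d < K.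
Proof.
move=> Ay; have nzA : A != set0 by apply/set0Pn; exists y.
have [_ minA] := minvP d nzA.
exact: leq_ltn_trans (minA y Ay).
Qed.

Lemma in_symdiff A B x : (x \in symdiff A B) = ((x \in A) != (x \in B)).
Proof. by rewrite !inE; case: (x \in A); case: (x \in B). Qed.

Lemma symdiff_eq0 A B : (symdiff A B == set0) = (A == B).
Proof.
apply/eqP/eqP => [/setP AB | ->]; last by apply/setP => x; rewrite in_symdiff eqxx inE.
by apply/setP => x; move: (AB x); rewrite in_symdiff inE => /negbFE/eqP.
Qed.

Lemma trace_neqP A B D :
  reflect (exists2 y, y \in D & y \in symdiff A B) (A :&: D != B :&: D).
Proof.
apply: (iffP idP) => [ABD | [y Dy ABy]]; last first.
  apply: contraTneq ABy => /setP /(_ y).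
  by rewrite in_symdiff !inE Dy !andbT => ->; rewrite eqxx.
apply/exists_inP; apply: contraR ABD => /exists_inPn noy; apply/eqP/setP => y.
move: (noy y); rewrite in_symdiff !inE.
by case: (y \in D); rewrite ?andbF ?andbT // => /(_ isT) /negPn /eqP.
Qed.

Lemma idcode_twin_free C : is_idcode e C -> twin_free e.
Proof.
move=> /andP [_ /forallP sepC] v w vw; apply: contra (implyP (forallP (sepC v) w) vw).
by move=> /eqP ->.
Qed.

Variant lex_step_spec C j : option {set 'I_n} -> Type :=
  | StepCover of N e j :&: C = set0 :
      lex_step_spec C j (Some (C :|: [set minv (N e j) j]))
  | StepSeparate k of k < j & N e k :&: C = N e j :&: C & N e j != N e k :
      lex_step_spec C j (Some (C :|: [set minv (symdiff (N e j) (N e k)) j]))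
  | StepFail k of k < j & N e j = N e k : lex_step_spec C j None
  | StepKeep of N e j :&: C != set0
      & (forall k, k < j -> N e k :&: C != N e j :&: C) : lex_step_spec C j (Some C).

Lemma lex_stepP C j : lex_step_spec C j (lex_step e C j).
Proof.
rewrite /lex_step; case: eqP => [covered | /eqP uncovered]; first exact: StepCover.
set Ks := [set k | _]; have [Ks0 | /(minvP j) [kKs _]] := eqVneq Ks set0.
  apply: StepKeep => // k kj; apply/eqP => same.
  have : k \in Ks by rewrite inE kj same eqxx.
  by rewrite Ks0 inE.
move: kKs; set k := minv Ks j; rewrite inE => /andP [kj /eqP same].
by case: eqP => [twins | /eqP sep]; [apply: StepFail twins | apply: StepSeparate].
Qed.

Definition lex_fold (oc : option {set 'I_n}) j : option {set 'I_n} :=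
  if oc is Some C then lex_step e C j else None.

Lemma lex_fold_None (l : seq 'I_n) : foldl lex_fold None l = None.
Proof. by elim: l. Qed.

(* Induction principle for Algorithm 1: an invariant P m C ("C after processing
   the m first vertices") preserved by every successful step holds for the output. *)
Lemma lex_alg_ind (P : nat -> {set 'I_n} -> Prop) :
  P 0 set0 -> (forall j C C', P j C -> lex_step e C j = Some C' -> P j.+1 C') ->
  forall C, lex_alg e = Some C -> P n C.
Proof.
move=> P0 Pstep.
have run (l : seq 'I_n) m C C' : map val l = iota m (size l) -> P m C ->
    foldl lex_fold (Some C) l = Some C' -> P (m + size l) C'.
  elim: l m C => [|j l IHl] m C /=; first by rewrite addn0 => _ ? [<-].
  case=> <- vals PC; rewrite addnS -addSn /lex_fold.
  case step: (lex_step e C j) => [C1|]; first exact: IHl vals (Pstep _ _ _ PC step).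
  by rewrite lex_fold_None.
move=> Cout out; have := run _ 0 set0 Cout _ P0 out.
by rewrite size_enum_ord val_enum_ord; apply.
Qed.

Lemma lex_alg_total : twin_free e -> exists C, lex_alg e = Some C.
Proof.
move=> tfree; rewrite /lex_alg.
elim: (enum 'I_n) set0 => [|j l IHl] C /=; first by exists C.
case: lex_stepP => [_ | k _ _ _ | k kj twins | _ _] /=; try exact: IHl.
by case/eqP: (tfree j k (negbT (gtn_eqF kj))).
Qed.

(* If the prefix {0,...,K-1} is an identifying code, every vertex the algorithm
   adds is the least element of a set meeting that prefix, hence lies in it. *)
Lemma lex_alg_prefix (K : nat) : is_idcode e [set i : 'I_n | i < K] ->
  exists2 C, lex_alg e = Some C & C \subset [set i : 'I_n | i < K].
Proof.
set T := [set i : 'I_n | i < K] => idT.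
have [C out] := lex_alg_total (idcode_twin_free idT); exists C => //.
move: C out; apply: (@lex_alg_ind (fun _ C => C \subset T)) => [|j C C' CT];
  first exact: sub0set.
case: lex_stepP => [_ [<-] | k kj _ _ [<-] | // | _ _ [<-] //];
  rewrite subUset CT sub1set inE.
- have /andP [/forallP coverT _] := idT.
  have /set0Pn [y /setIP [Njy]] := coverT j; rewrite inE; exact: minv_lt.
- have /andP [_ /forallP sepT] := idT.
  have /trace_neqP [y] := implyP (forallP (sepT j) k) (negbT (gtn_eqF kj)).
  by rewrite inE => yK /minv_lt; apply.
Qed.

Definition identifies_below (m : nat) C : Prop :=
  (forall v, v < m -> N e v :&: C != set0) /\
  (forall v w, v < m -> w < m -> v != w -> N e v :&: C != N e w :&: C).

Lemma cover_mono C D v : C \subset D -> N e v :&: C != set0 -> N e v :&: D != set0.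
Proof.
move=> CD /set0Pn [x /setIP [Nx Cx]]; apply/set0Pn; exists x.
by rewrite inE Nx (subsetP CD).
Qed.

Lemma separate_mono C D v w : C \subset D ->
  N e v :&: C != N e w :&: C -> N e v :&: D != N e w :&: D.
Proof. by move=> CD; apply: contraNneq => vwD; rewrite -(setIidPr CD) !setIA vwD. Qed.

Lemma identifies_below_S C C' j : identifies_below j C -> C \subset C' ->
  N e j :&: C' != set0 -> (forall v, v < j -> N e v :&: C' != N e j :&: C') ->
  identifies_below j.+1 C'.
Proof.
move=> [coverC sepC] CC' coverj sepj.
have below_S (u : 'I_n) : u < j.+1 -> u = j \/ u < j.
  by rewrite ltnS leq_eqVlt => /orP [/eqP/val_inj | ]; [left | right].
split=> [v /below_S [-> // | vj] | v w /below_S [-> | vj] /below_S [-> | wj]].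
- exact: cover_mono CC' (coverC v vj).
- by rewrite eqxx.
- by move=> _; rewrite eq_sym; apply: sepj.
- by move=> _; apply: sepj.
- by move=> vw; apply: separate_mono CC' (sepC v w vj wj vw).
Qed.

Lemma lex_step_identifies j C C' :
  identifies_below j C -> lex_step e C j = Some C' -> identifies_below j.+1 C'.
Proof.
move=> idC; have [coverC sepC] := idC.
case: lex_stepP => [uncov [<-] | k kj sameC njk [<-] | // | coverj sepj [<-]].
- have nzN : N e j != set0 by apply/set0Pn; exists j; rewrite inE eqxx.
  have [xN _] := minvP j nzN.
  apply: identifies_below_S idC (subsetUl _ _) _ _.
    by apply/set0Pn; exists (minv (N e j) j); rewrite in_setI xN in_setU set11 orbT.
  by move=> v vj; apply: separate_mono (subsetUl _ _) _; rewrite uncov coverC.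
- set x := minv (symdiff (N e j) (N e k)) j.
  have nzjk : symdiff (N e j) (N e k) != set0 by rewrite symdiff_eq0.
  have [xjk _] := minvP j nzjk.
  apply: identifies_below_S idC (subsetUl _ _) _ _.
    by apply: cover_mono (subsetUl _ _) _; rewrite -sameC coverC.
  move=> v vj; have [-> | vk] := eqVneq v k.
    by rewrite eq_sym; apply/trace_neqP; exists x => //; rewrite in_setU set11 orbT.
  by apply: separate_mono (subsetUl _ _) _; rewrite -sameC; apply: sepC.
- exact: identifies_below_S idC (subxx _) coverj sepj.
Qed.

Lemma lex_alg_idcode C : lex_alg e = Some C -> is_idcode e C.
Proof.
have start : identifies_below 0 set0 by split.
move=> /(lex_alg_ind start lex_step_identifies) [coverC sepC].
apply/andP; split; first by apply/forallP => v; apply: coverC.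
by apply/forallP => v; apply/forallP => w; apply/implyP; apply: sepC.
Qed.
End LexAlgorithm.


Section Relabelling.
Variable n : nat.
Implicit Types (e : rel 'I_n) (C : {set 'I_n}) (s : {perm 'I_n}).

Lemma N_relabel e s v : N (relabel e s) v = s @: N e (s^-1 v)%g.
Proof.
apply/setP => w; rewrite -{2}(permKV s w) mem_imset; last exact: perm_inj.
by rewrite !inE (inj_eq perm_inj).
Qed.

Lemma idcode_relabel e s C : is_idcode e C -> is_idcode (relabel e s) (s @: C).
Proof.
have trace v : N (relabel e s) v :&: s @: C = s @: (N e (s^-1 v)%g :&: C).
  by rewrite N_relabel imsetI //; move=> x y _ _; apply: perm_inj.
move=> /andP [/forallP coverC /forallP sepC]; apply/andP; split.
  by apply/forallP => v; rewrite trace imset_eq0.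
apply/forallP => v; apply/forallP => w; apply/implyP => vw.
rewrite !trace (inj_eq (imset_inj perm_inj)).
by apply: (implyP (forallP (sepC _) _)); rewrite (inj_eq perm_inj).
Qed.

Lemma idcode_eq e e' C : e =2 e' -> is_idcode e C = is_idcode e' C.
Proof.
move=> ee'; have sameN v : N e v = N e' v by apply/setP => w; rewrite !inE ee'.
by rewrite /is_idcode; congr (_ && _); apply: eq_forallb => v; rewrite ?sameN //;
  apply: eq_forallb => w; rewrite !sameN.
Qed.

Lemma relabelK e s : relabel (relabel e s) (s^-1)%g =2 e.
Proof. by move=> i j; rewrite /relabel !invgK !permK. Qed.

Lemma idcode_unrelabel e s C : is_idcode (relabel e s) C -> is_idcode e (s^-1 @: C)%g.
Proof. by move=> /(idcode_relabel (s^-1)%g); rewrite (idcode_eq _ (relabelK e s)). Qed.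
End Relabelling.


Section IdentifyingNumber.
Variable n : nat.
Implicit Types (e : rel 'I_n) (C : {set 'I_n}).

Lemma idcode_setT e : twin_free e -> is_idcode e [set: 'I_n].
Proof.
move=> tfree; apply/andP; split.
  by apply/forallP => v; rewrite setIT; apply/set0Pn; exists v; rewrite inE eqxx.
by apply/forallP => v; apply/forallP => w; apply/implyP; rewrite !setIT; apply: tfree.
Qed.

Lemma card_vertex_set C : #|C| <= n.
Proof. by rewrite -[X in _ <= X]card_ord max_card. Qed.

(* idnum is a minimum over identifying codes (Order.min on nat is minn). *)
Lemma idnum_le e C : is_idcode e C -> idnum e <= #|C|.
Proof. exact: (Order.TotalTheory.bigmin_le_cond n (fun C : {set 'I_n} => #|C|)). Qed.

Lemma idnum_attained e : twin_free e -> exists2 C, is_idcode e C & #|C| = idnum e.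
Proof.
move=> /idcode_setT idT; rewrite /idnum -minEnat.
have [C idC ->] := Order.TotalTheory.eq_bigmin (x := n) _ _ (fun C => #|C|) idT
  (fun C _ => card_vertex_set C).
by exists C.
Qed.

Lemma card_prefix (K : nat) : K <= n -> #|[set i : 'I_n | i < K]| = K.
Proof.
move=> Kn; have widen_inj : injective (widen_ord Kn).
  by move=> i j /(congr1 val) ij; apply: val_inj.
rewrite -[RHS](card_ord K) -(card_imset _ widen_inj).
apply: eq_card => i; rewrite inE; apply/idP/imsetP => [iK | [j _ ->]]; last exact: (ltn_ord j).
by exists (Ordinal iK) => //; apply: val_inj.
Qed.
End IdentifyingNumber.

Lemma lex_alg_optimal (n : nat) (H : rel 'I_n) (C0 : {set 'I_n}) (s : {perm 'I_n}) :
  is_idcode H C0 -> #|C0| = idnum H -> s @: C0 = [set i : 'I_n | i < idnum H] ->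
  exists2 C, lex_alg (relabel H s) = Some C &
             is_idcode (relabel H s) C && (#|C| == idnum H).
Proof.
move=> idC0 cardC0 sC0; have := idcode_relabel s idC0; rewrite sC0.
move=> /lex_alg_prefix [C out CT]; exists C; rewrite // lex_alg_idcode //=.
have Kn : idnum H <= n by rewrite -cardC0 card_vertex_set.
rewrite eqn_leq (leq_trans (subset_leq_card CT)) ?card_prefix //=.
have := idnum_le (idcode_unrelabel (lex_alg_idcode out)).
by rewrite card_imset //; apply: perm_inj.
Qed.

(* Probabilities over the uniform bijection s are stated as counts over all
   n`! permutations (common denominator n`!). *)
Theorem mainTheorem5 (n : nat) (H : rel 'I_n) :
  simple_graph H -> twin_free H ->
  (forall K : nat, 1 <= K <= n ->
     #|[set s : {perm 'I_n} | (is_idcode (relabel H s) [set i : 'I_n | i < K])]|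
     <= #|[set s : {perm 'I_n} |
             if lex_alg (relabel H s) is Some C then #|C| <= K else false]|)
  /\
  n`! <= #|[set s : {perm 'I_n} |
             if lex_alg (relabel H s) is Some C
             then is_idcode (relabel H s) C && (#|C| == idnum H)
             else false]| * 'C(n, idnum H).
Proof.
move=> _ tfree; split.
  move=> K /andP [_ Kn]; apply/subset_leq_card/subsetP => s; rewrite !inE.
  case/lex_alg_prefix=> C -> CT.
  by rewrite -[X in _ <= X](card_prefix Kn) subset_leq_card.
have [C0 idC0 cardC0] := idnum_attained tfree.
have Kn : idnum H <= n by rewrite -cardC0 card_vertex_set.
have sizes : #|C0| = #|[set i : 'I_n | i < idnum H]| by rewrite card_prefix.
rewrite -[n in n`!]card_ord; apply: leq_trans (card_perms_onto_set sizes) _.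
rewrite card_ord cardC0 leq_mul2r; apply/orP; right.
apply/subset_leq_card/subsetP => s; rewrite !inE => /eqP sC0.
by have [C -> ->] := lex_alg_optimal idC0 cardC0 sC0.
Qed.
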